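(* Let $m>0$, $n$ an odd positive integer, $V=[-m/2,m/2]$. For every dataset $D\in V^n$ and every $\ell\in V$, $$\mathrm{SWDIFF}(D,\ell)=|\mathcal{T}(D)-\ell|+2\sum_{j\in C(D,\ell)}|x_j-\ell|,$$ where $C(D,\ell)$ is the set of crossed agents.
   Context: A dataset is $D=(x_1,\dots,x_n)\in V^n$ of agent locations, indexed so that $x_1\le\dots\le x_n$. The optimal facility location is the median $\mathcal{T}(D)=x_{\lceil n/2\rceil}$. The social welfare of a facility at $\ell$ is $s(D,\ell)=-\sum_{i=1}^n|x_i-\ell|$, and $\mathrm{SWDIFF}(D,\ell)=s(D,\mathcal{T}(D))-s(D,\ell)$. The set of crossed agents is $C(D,\ell)=\{i: i<\lceil n/2\rceil,\ x_i\in[\ell,\mathcal{T}(D)]\}$ if $\ell<\mathcal{T}(D)$; $C(D,\ell)=\{i: i>\lceil n/2\rceil,\ x_i\in[\mathcal{T}(D),\ell]\}$ if $\ell>\mathcal{T}(D)$; and $C(D,\ell)=\emptyset$ if $\ell=\mathcal{T}(D)$. *)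

From mathcomp Require Import all_boot all_order all_algebra.
Set Implicit Arguments. Unset Strict Implicit. Unset Printing Implicit Defensive.
Import Order.TTheory GRing.Theory Num.Theory.
Local Open Scope ring_scope.

(* A dataset D = (x_1,...,x_n) is a sequence s with s`_(i-1) = x_i
   (0-based positions in Rocq). *)

(* 0-based position of the median: ceil(n/2) - 1. *)
Definition medidx (n : nat) : nat := ((n.+1)./2).-1.

Section Defs.
Variable R : realFieldType.

Definition optT (s : seq R) : R := s`_(medidx (size s)).

Definition sw (s : seq R) (l : R) : R := - \sum_(i < size s) `|s`_i - l|.

Definition swdiff (s : seq R) (l : R) : R := sw s (optT s) - sw s l.

Definition crossed (s : seq R) (l : R) (i : nat) : bool :=
  if l < optT s then (i < medidx (size s))%N && (l <= s`_i <= optT s)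
  else if optT s < l then (medidx (size s) < i)%N && (optT s <= s`_i <= l)
  else false.

End Defs.

From mathcomp Require Import all_boot all_order all_algebra.
From mathcomp Require Import zify lra.
Import Order.TTheory GRing.Theory Num.Theory.
Local Open Scope ring_scope.

(* Write n = 2k + 1, so the median is x_k (0-based).  Moving the facility from
   the median T to l < T costs exactly T - l for every agent at or right of the
   median; for an agent x_i left of the median it saves T - l, unless
   l <= x_i, i.e. the agent is crossed, in which case it loses 2|x_i - l| of
   that saving.  There is one more agent on the first side than on the second,
   whence |T - l| + 2 * sum over crossed agents.  The case l > T is the mirror
   image. *)

Lemma medidx_odd (k : nat) : medidx k.*2.+1 = k.
Proof. by rewrite /medidx; lia. Qed.

Lemma sum_sign_threshold {R : pzRingType} (a b : nat) :
  \sum_(i < a + b) (if (a <= i)%N then 1 else -1 : R) = b%:R - a%:R.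
Proof.
rewrite big_split_ord /=.
rewrite (eq_bigr (fun _ => -1)) => [|i _]; last by rewrite leqNgt ltn_ord.
rewrite [X in _ + X](eq_bigr (fun _ => 1)) => [|i _]; last by rewrite /= leq_addr.
by rewrite !sumr_const !card_ord -mulNrn addrC.
Qed.

Lemma sum_decomp_signed {R : pzRingType} (e : nat -> R) (n : nat)
    (F f : 'I_n -> R) (P : pred 'I_n) (d : R) :
  \sum_(i < n) e i = 1 ->
  (forall i, F i = e i * d + (if P i then 2 * f i else 0)) ->
  \sum_(i < n) F i = d + 2 * \sum_(i < n | P i) f i.
Proof.
move=> sum_e1 F_dec; under eq_bigr => i _ do rewrite F_dec.
by rewrite big_split /= -mulr_suml sum_e1 mul1r mulr_sumr [in RHS]big_mkcond.
Qed.

Section Distance.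
Variable R : realDomainType.
Implicit Types x l t : R.

Lemma distB_beyond x l t : l <= t <= x -> `|x - l| - `|x - t| = `|t - l|.
Proof. by case/andP=> lt tx; rewrite !ger0_norm ?subr_ge0; lra. Qed.

Lemma distB_behind x l t : l <= t -> x <= t ->
  `|x - l| - `|x - t| = - `|t - l| + (if l <= x then 2 * `|x - l| else 0).
Proof.
move=> lt xt; rewrite [`|t - l|]ger0_norm ?subr_ge0 // [`|x - t|]ler0_norm ?subr_le0 //.
case: leP => lx; first by rewrite ger0_norm ?subr_ge0 //; lra.
by rewrite ltr0_norm ?subr_lt0 //; lra.
Qed.

Lemma distB_beyondN x l t : x <= t <= l -> `|x - l| - `|x - t| = `|t - l|.
Proof. by case/andP=> xt tl; rewrite !ler0_norm ?subr_le0; lra. Qed.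

Lemma distB_behindN x l t : t <= l -> t <= x ->
  `|x - l| - `|x - t| = - `|t - l| + (if x <= l then 2 * `|x - l| else 0).
Proof.
move=> tl tx; rewrite [`|t - l|]ler0_norm ?subr_le0 // [`|x - t|]ger0_norm ?subr_ge0 //.
case: leP => xl; first by rewrite ler0_norm ?subr_le0 //; lra.
by rewrite gtr0_norm ?subr_gt0 //; lra.
Qed.

End Distance.

Section CrossedDecomposition.
Variables (R : realFieldType) (s : seq R) (k : nat).
Hypotheses (s_sorted : sorted <=%R s) (size_s : size s = k.*2.+1).

Lemma medidx_size : medidx (size s) = k.
Proof. by rewrite size_s medidx_odd. Qed.

Lemma optT_odd : optT s = s`_k.
Proof. by rewrite /optT medidx_size. Qed.

Lemma nth_sorted_le i j : (i <= j)%N -> (j < size s)%N -> s`_i <= s`_j.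
Proof.
move=> ij js; apply: (sorted_leq_nth le_trans lexx 0 s_sorted) => //.
by rewrite inE (leq_ltn_trans ij).
Qed.

Lemma nth_le_optT i : (i <= k)%N -> s`_i <= optT s.
Proof. by move=> ik; rewrite optT_odd nth_sorted_le // size_s; lia. Qed.

Lemma optT_le_nth i : (k <= i)%N -> (i < size s)%N -> optT s <= s`_i.
Proof. by rewrite optT_odd; apply: nth_sorted_le. Qed.

Lemma swdiff_lt_optT l : l < optT s ->
  swdiff s l = `|optT s - l| + 2 * \sum_(i < size s | crossed s l i) `|s`_i - l|.
Proof.
move=> l_lt_T; have l_le_T := ltW l_lt_T.
rewrite /swdiff /sw opprK addrC -sumrB.
apply: (sum_decomp_signed (fun i => if (k <= i)%N then 1 else -1)).
  by rewrite size_s -addnn -addnS sum_sign_threshold mulrS addrK.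
move=> i; rewrite /crossed l_lt_T medidx_size.
case: leqP => [ki | ik].
  by rewrite mul1r addr0 distB_beyond // l_le_T optT_le_nth.
have iT : s`_i <= optT s by apply/nth_le_optT/ltnW.
by rewrite iT andbT mulN1r distB_behind.
Qed.

Lemma swdiff_gt_optT l : optT s < l ->
  swdiff s l = `|optT s - l| + 2 * \sum_(i < size s | crossed s l i) `|s`_i - l|.
Proof.
move=> T_lt_l; have T_le_l := ltW T_lt_l.
rewrite /swdiff /sw opprK addrC -sumrB.
apply: (sum_decomp_signed (fun i => if (i <= k)%N then 1 else -1)).
  rewrite size_s -addnn -addSn.
  rewrite -[LHS]opprK -sumrN.
  rewrite (eq_bigr (fun i : 'I_(k.+1 + k) => if (k < i)%N then 1 else -1)).
    by rewrite sum_sign_threshold opprB mulrS addrK.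
  by move=> i _; rewrite ltnNge; case: (i <= k)%N => //=; rewrite opprK.
move=> i; rewrite /crossed ltNge T_le_l T_lt_l medidx_size /=.
case: leqP => [ik | ki].
  by rewrite mul1r addr0 distB_beyondN // nth_le_optT.
have Ti : optT s <= s`_i by apply: optT_le_nth (ltnW ki) _.
by rewrite Ti mulN1r distB_behindN.
Qed.

Lemma swdiff_crossed l :
  swdiff s l = `|optT s - l| + 2 * \sum_(i < size s | crossed s l i) `|s`_i - l|.
Proof.
case: (ltgtP l (optT s)) => [|T_lt_l|l_eq_T]; first exact: swdiff_lt_optT.
  exact: swdiff_gt_optT.
rewrite /swdiff -l_eq_T !subrr normr0 add0r big_pred0 ?mulr0 // => i.
by rewrite /crossed -l_eq_T ltxx.
Qed.

End CrossedDecomposition.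

Theorem theorem4p3 (R : realFieldType) (m : R) (n : nat) (s : seq R) (l : R) :
  0 < m -> (0 < n)%N -> odd n -> size s = n ->
  sorted <=%R s ->
  all (fun x => (- (m / 2) <= x) && (x <= m / 2)) s ->
  - (m / 2) <= l <= m / 2 ->
  swdiff s l = `|optT s - l| + 2 * \sum_(i < size s | crossed s l i) `|s`_i - l|.
Proof.
move=> _ _ odd_n size_n s_sorted _ _.
have size_s : size s = (n./2).*2.+1.
  by rewrite size_n -[n in LHS]odd_double_half odd_n.
exact: swdiff_crossed s_sorted size_s l.
Qed.
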